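(* Let $\mathcal{G}$ be a linear $3$-partite $3$-graph with vertex classes $\mathcal{A},\mathcal{B},\mathcal{C}$ (every hyperedge has exactly one vertex in each class). Let $G$ be a simple bipartite graph with parts $A=\binom{\mathcal{A}}{2}$ and $B=\binom{\mathcal{B}}{2}$ such that for every edge of $G$ between $\{a_1,a_2\}\in A$ and $\{b_1,b_2\}\in B$ there is some $c\in\mathcal{C}$ with $a_1b_1c,\ a_2b_2c\in E(\mathcal{G})$, or there is some $c'\in\mathcal{C}$ with $a_1b_2c',\ a_2b_1c'\in E(\mathcal{G})$. Let $k\ge t\ge 4$ be integers, and suppose $F$ is a $2$-degenerate subgraph of $G$ with $k$ vertices and $2k-t$ edges. Then $\mathcal{G}$ contains a subgraph $\mathcal{F}$ such that (1) $|V(\mathcal{F})|-4t\le |E(\mathcal{F})|\le 4k$, and (2) either $|E(\mathcal{F})|\ge 4k-10^4t^3$ or $|E(\mathcal{F})|\ge |V(\mathcal{F})|>0$.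
   Context: A $3$-graph is linear if any two distinct hyperedges share at most one vertex. A graph is $2$-degenerate if its vertices can be ordered $v_1,\dots,v_k$ so that each $v_i$ has at most $2$ neighbours among $v_1,\dots,v_{i-1}$. A subgraph $\mathcal{F}$ of $\mathcal{G}$ consists of a vertex set $V(\mathcal{F})\subseteq V(\mathcal{G})$ and a set $E(\mathcal{F})\subseteq E(\mathcal{G})$ of hyperedges each contained in $V(\mathcal{F})$ (isolated vertices allowed). *)

From mathcomp Require Import all_boot.
Set Implicit Arguments. Unset Strict Implicit. Unset Printing Implicit Defensive.

Definition three_partite (V : finType) (Ac Bc Cc : {set V})
    (E : {set {set V}}) : Prop :=
  [/\ [disjoint Ac & Bc], [disjoint Ac & Cc], [disjoint Bc & Cc],
      Ac :|: Bc :|: Cc = [set: V] &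
      forall e, e \in E ->
        [/\ #|e| = 3, #|e :&: Ac| = 1, #|e :&: Bc| = 1 & #|e :&: Cc| = 1]].

Definition linear_hg (V : finType) (E : {set {set V}}) : Prop :=
  forall e1 e2, e1 \in E -> e2 \in E -> e1 != e2 -> #|e1 :&: e2| <= 1.

Definition hsubgraph (V : finType) (E : {set {set V}})
    (VH : {set V}) (EH : {set {set V}}) : Prop :=
  EH \subset E /\ forall e, e \in EH -> e \subset VH.

Definition pairs (V : finType) (S : {set V}) : {set {set V}} :=
  [set P : {set V} | (P \subset S) && (#|P| == 2)].

Definition bipartite_graph (T : finType) (A B : {set T})
    (EG : {set {set T}}) : Prop :=
  forall e, e \in EG -> exists P Q, [/\ P \in A, Q \in B & e = [set P; Q]].

Definition gsubgraph (T : finType) (VG : {set T}) (EG : {set {set T}})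
    (VF : {set T}) (EF : {set {set T}}) : Prop :=
  [/\ VF \subset VG, EF \subset EG & forall e, e \in EF -> e \subset VF].

Definition two_degenerate (T : finType) (VF : {set T}) (EF : {set {set T}})
    : Prop :=
  exists s : seq T,
    [/\ uniq s, (forall x, (x \in s) = (x \in VF)) &
        forall s1 x s2, s = s1 ++ x :: s2 ->
          count (fun y => [set y; x] \in EF) s1 <= 2].

From mathcomp Require Import all_boot zify.
Set Implicit Arguments.
Unset Strict Implicit.
Unset Printing Implicit Defensive.

(* For every edge {a1 a2, b1 b2} of F take hyperedges a1 b1 c and a2 b2 c (or
   a1 b2 c' and a2 b1 c'); H consists of all of them, so |E(H)| <= 2|E(F)| <= 4k.
   Order V(F) as in the 2-degeneracy: every edge is a back edge of its later end
   and each pair has at most 2 back edges.  A vertex u lying in a pair of F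
   receives, from each back edge of the first pair containing u, the hyperedge
   through u; by linearity all these hyperedges are distinct, which gives
   2|U| <= |E(H)| + 2(2|V(F)| - |E(F)|) = |E(H)| + 2t.  Every hyperedge has one
   vertex in C and each such vertex lies in m_c >= 2 hyperedges of H, so
   |E(H)| = Y + 2|C_H| with Y = sum (m_c - 2), whence |V(H)| <= |E(H)| + t.  If
   |V(H)| > |E(H)| then moreover Y < 2t; an edge of F is determined by its two
   hyperedges, which meet in C, so |E(F)| <= sum binom(m_c, 2), which turns into
   4k - 2t <= |E(H)| + (Y + 2) Y. *)

Lemma card_bigcup_le (I T : finType) (P : pred I) (F : I -> {set T}) :
  #|\bigcup_(i | P i) F i| <= \sum_(i | P i) #|F i|.
Proof.
elim/big_rec2: _ => [|i x y _ IH]; first by rewrite cards0.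
by rewrite (leq_trans (leq_card_setU _ _)) // leq_add2l.
Qed.

Lemma leq_sum_comp (I J : finType) (A : {set I}) (B : {set J}) (p : I -> J)
    (w : J -> nat) n :
  {in A, forall i, p i \in B} ->
  {in B, forall j, #|[set i in A | p i == j]| <= n} ->
  \sum_(i in A) w (p i) <= n * \sum_(j in B) w j.
Proof.
move=> pAB fibre; rewrite (partition_big p (mem B)) //= big_distrr /=.
apply: leq_sum => j jB.
rewrite (eq_bigr (fun=> w j)); last by move=> i /andP[_ /eqP ->].
rewrite (eq_bigl (mem [set i in A | p i == j])); last by move=> i; rewrite !inE.
by rewrite sum_nat_const leq_mul2r fibre ?orbT.
Qed.

Lemma sum_card_le_of_inj (I J K : finType) (A : {set I}) (B : I -> {set J})
    (C : {set K}) (g : I -> J -> K) :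
  (forall i j, i \in A -> j \in B i -> g i j \in C) ->
  (forall i i' j j', i \in A -> i' \in A -> j \in B i -> j' \in B i' ->
     g i j = g i' j' -> (i, j) = (i', j')) ->
  \sum_(i in A) #|B i| <= #|C|.
Proof.
move=> gC g_inj.
under eq_bigr => i _ do rewrite -sum1_card.
rewrite pair_big_dep sum1dep_card.
set D := [set x | _]; pose gg x := g x.1 x.2.
have gg_inj : {in D &, injective gg}.
  by move=> [i j] [i' j']; rewrite !inE /= => /andP[iA jB] /andP[i'A j'B]; apply: g_inj.
rewrite -(card_in_imset gg_inj); apply: subset_leq_card.
by apply/subsetP=> _ /imsetP[[i j] /[!inE] /andP[iA jB] ->]; apply: gC.
Qed.

Lemma setI_set3 (T : finType) (S : {set T}) x y z :
  x \in S -> y \notin S -> z \notin S -> [set x; y; z] :&: S = [set x].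
Proof.
move=> xS yS zS; apply/setP=> v; rewrite !inE.
case: (eqVneq v x) => [->|_]; first by rewrite xS.
case: (eqVneq v y) => [->|_]; first by rewrite (negbTE yS) andbF.
by case: (eqVneq v z) => [->|_]; rewrite ?(negbTE zS) ?andbF.
Qed.

Lemma double_sum_bin2_le (I : finType) (A : {set I}) (m : I -> nat) :
  2 * \sum_(i in A) 'C(m i, 2) <=
  \sum_(i in A) m i + (\sum_(i in A) (m i - 2) + 2) * \sum_(i in A) (m i - 2).
Proof.
set Y := \sum_(i in A) (m i - 2).
rewrite big_distrr [in X in _ <= _ + X]big_distrr -big_split /=.
apply: leq_sum => i iA.
have mY : m i - 2 <= Y by rewrite /Y (bigD1 i) //= leq_addr.
have := bin_ffact (m i) 2; rewrite ffactnS ffactn1 -subn1 (_ : 2`! = 2) //.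
nia.
Qed.

Lemma sum_card_rel (I J : finType) (A : {set I}) (B : {set J}) (R : I -> J -> bool) :
  \sum_(i in A) #|[set j in B | R i j]| = \sum_(j in B) #|[set i in A | R i j]|.
Proof.
have card_sum (T : finType) (C : {set T}) (p : pred T) :
    #|[set x in C | p x]| = \sum_(x in C) p x.
  by rewrite -sum1dep_card big_mkcondr; apply: eq_bigr => x _; case: (p x).
rewrite (eq_bigr _ (fun i _ => card_sum _ _ _)) exchange_big.
by apply: eq_bigr => j _; rewrite card_sum.
Qed.

Lemma disjoint_pairs (T : finType) (A B : {set T}) :
  [disjoint A & B] -> [disjoint pairs A & pairs B].
Proof.
move=> dAB; rewrite -setI_eq0; apply/eqP/setP=> P; rewrite !inE.
apply/negP=> /andP[/andP[PA /eqP P2] /andP[PB _]].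
have : P \subset A :&: B by rewrite subsetI PA PB.
by rewrite (disjoint_setI0 dAB) subset0 => /eqP P0; rewrite P0 cards0 in P2.
Qed.

Lemma card_bipartite_edge (T : finType) (A B : {set T}) (EG : {set {set T}}) e :
  [disjoint A & B] -> bipartite_graph A B EG -> e \in EG -> #|e| = 2.
Proof.
move=> dAB bipG /bipG[P [Q [PA QB ->]]].
have PQ : P != Q by apply: contraTneq PA => ->; rewrite (disjointFl dAB QB).
by rewrite cards2 PQ.
Qed.

Lemma quadratic_le_cube t : 2 * t + (2 * t + 1) * (2 * t) <= 10 ^ 4 * t ^ 3.
Proof.
have [-> // | t_gt0] := posnP t.
have t_le_sq : t <= t * t by rewrite leq_pmull.
have sq_le_cube : t * t <= t * t * t by rewrite leq_pmulr // muln_gt0 t_gt0.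
have : 8 * t ^ 3 <= 10 ^ 4 * t ^ 3 by rewrite leq_mul2r orbT.
by rewrite !expnS expn0 !muln1 mulnA; lia.
Qed.

Section BackEdges.

Variables (T : finType) (VF : {set T}) (EF : {set {set T}}) (s : seq T).
Hypothesis edge_sub : forall f, f \in EF -> f \subset VF.
Hypothesis card_edge : forall f, f \in EF -> #|f| = 2.
Hypothesis mem_s : forall x, (x \in s) = (x \in VF).

Definition back_edges P :=
  [set f in EF | (P \in f) && [forall Q in f, index Q s <= index P s]].

Lemma back_edgesP P f :
  reflect [/\ f \in EF, P \in f & forall Q, Q \in f -> index Q s <= index P s]
          (f \in back_edges P).
Proof.
rewrite inE; apply: (iffP and3P) => [[-> -> /forall_inP] | [-> -> le]] //.
by split=> //; apply/forall_inP.
Qed.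

Lemma card_edges_le_sum_back : #|EF| <= \sum_(P in VF) #|back_edges P|.
Proof.
apply: leq_trans (card_bigcup_le _ back_edges); apply: subset_leq_card.
apply/subsetP=> f fE; have /card_gt0P[P0 P0f] : 0 < #|f| by rewrite card_edge.
case: (arg_maxnP (fun Q => index Q s) P0f) => P Pf Pmax.
apply/bigcupP; exists P; first exact: subsetP (edge_sub fE) P Pf.
by apply/back_edgesP.
Qed.

Lemma card_back_edges_le d P :
  (forall s1 x s2, s = s1 ++ x :: s2 -> count (fun y => [set y; x] \in EF) s1 <= d) ->
  P \in VF -> #|back_edges P| <= d.
Proof.
move=> deg PV; have Ps : P \in s by rewrite mem_s.
set i := index P s.
have s_split : s = take i s ++ P :: drop i.+1 s.
  by rewrite -{1}(cat_take_drop i s) (drop_nth P) ?index_mem // nth_index.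
apply: leq_trans (deg _ _ _ s_split); rewrite -size_filter.
set earlier := [seq y <- take i s | [set y; P] \in EF].
apply: (@leq_trans #|[set [set y; P] | y in earlier]|); last first.
  by rewrite (leq_trans (leq_imset_card _ _)) // card_size.
apply/subset_leq_card/subsetP=> f /back_edgesP[fE Pf le_P].
have /eqP/cards2P[y1 [y2 [y12 f_eq]]] := card_edge fE.
have [y yP f_yP] : exists2 y, y != P & f = [set y; P].
  move: Pf; rewrite f_eq => /set2P[->|->]; last by exists y1.
  by exists y2; rewrite 1?eq_sym // setUC.
have ys : y \in s by rewrite mem_s (subsetP (edge_sub fE)) // f_yP set21.
apply/imsetP; exists y => //; rewrite mem_filter -f_yP fE /=.
rewrite in_take // ltn_neqAle le_P ?f_yP ?set21 // andbT.
by apply: contra yP => /eqP idx_eq; rewrite -(nth_index P ys) idx_eq nth_index.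
Qed.

End BackEdges.

Section Realization.

Variables (V : finType) (Ac Bc Cc : {set V}) (E : {set {set V}}).
Hypotheses (disjAB : [disjoint Ac & Bc]) (disjAC : [disjoint Ac & Cc])
  (disjBC : [disjoint Bc & Cc]).

(* [f = {a1 a2, b1 b2}] is realized by [h = a1 b1 c] and [h' = a2 b2 c]; the
   two pairs of [f] are read off [h :|: h'] class by class. *)
Definition realizes (f : {set {set V}}) (h h' : {set V}) :=
  [&& h \in E, h' \in E, h != h',
      f == [set (h :|: h') :&: Ac; (h :|: h') :&: Bc] &
      [exists c in Cc, (c \in h) && (c \in h')]].

Lemma realizes_triples a1 a2 b1 b2 c :
  a1 \in Ac -> a2 \in Ac -> b1 \in Bc -> b2 \in Bc -> c \in Cc -> a1 != a2 ->
  [set a1; b1; c] \in E -> [set a2; b2; c] \in E ->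
  realizes [set [set a1; a2]; [set b1; b2]] [set a1; b1; c] [set a2; b2; c].
Proof.
move=> a1A a2A b1B b2B cC a12 E1 E2.
have [a1B a2B] : a1 \notin Bc /\ a2 \notin Bc by rewrite !(disjointFr disjAB).
have [b1A b2A] : b1 \notin Ac /\ b2 \notin Ac by rewrite !(disjointFl disjAB).
have [cA cB] : c \notin Ac /\ c \notin Bc.
  by rewrite (disjointFl disjAC) ?(disjointFl disjBC).
apply/and5P; split=> //.
- have a1C : a1 \notin Cc by rewrite (disjointFr disjAC).
  apply/eqP => h_eq; have : a1 \in [set a1; b1; c] by rewrite !inE eqxx.
  rewrite h_eq !inE (negbTE a12) => /orP[] /eqP a1_eq.
  - by move: a1B; rewrite a1_eq b2B.
  - by move: a1C; rewrite a1_eq cC.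
- rewrite setIUl (setI_set3 a1A b1A cA) (setI_set3 a2A b2A cA) setIUl.
  rewrite [[set a1; b1]]setUC [[set a2; b2]]setUC.
  by rewrite (setI_set3 b1B a1B cB) (setI_set3 b2B a2B cB).
- by apply/exists_inP; exists c; rewrite // !inE eqxx !orbT.
Qed.

Variable EG : {set {set {set V}}}.
Hypothesis bipG : bipartite_graph (pairs Ac) (pairs Bc) EG.
Hypothesis witness : forall a1 a2 b1 b2 : V, a1 != a2 -> b1 != b2 ->
  [set [set a1; a2]; [set b1; b2]] \in EG ->
  (exists2 c, c \in Cc & [set a1; b1; c] \in E /\ [set a2; b2; c] \in E)
  \/ (exists2 c', c' \in Cc & [set a1; b2; c'] \in E /\ [set a2; b1; c'] \in E).

Lemma realization_exists f :
  f \in EG -> exists hh : {set V} * {set V}, realizes f hh.1 hh.2.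
Proof.
move=> fG; have [P [Q [PA QB f_eq]]] := bipG fG.
move: PA QB; rewrite !inE => /andP[PA /cards2P[a1 [a2 [a12 P_eq]]]].
move=> /andP[QB /cards2P[b1 [b2 [b12 Q_eq]]]]; subst f P Q.
have [a1A a2A] : a1 \in Ac /\ a2 \in Ac by rewrite !(subsetP PA) ?set21 ?set22.
have [b1B b2B] : b1 \in Bc /\ b2 \in Bc by rewrite !(subsetP QB) ?set21 ?set22.
case: (witness a12 b12 fG) => [[c cC [E1 E2]] | [c cC [E1 E2]]].
  by exists ([set a1; b1; c], [set a2; b2; c]); apply: realizes_triples.
exists ([set a1; b2; c], [set a2; b1; c]).
by rewrite [[set b1; b2]]setUC; apply: realizes_triples.
Qed.

Lemma realization_choice (EF : {set {set {set V}}}) :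
  EF \subset EG ->
  exists h1 h2 : {set {set V}} -> {set V},
    forall f, f \in EF -> realizes f (h1 f) (h2 f).
Proof.
move=> EF_G; pose hh f := odflt (set0, set0) [pick hh | realizes f hh.1 hh.2].
exists (fun f => (hh f).1), (fun f => (hh f).2).
move=> f /(subsetP EF_G) fG; rewrite /hh; case: pickP => [//|none].
by have [hh'] := realization_exists fG; rewrite none.
Qed.

Section Lift.

Hypothesis cover_classes : Ac :|: Bc :|: Cc = [set: V].
Hypothesis hyperedge_classes : forall e, e \in E ->
  [/\ #|e| = 3, #|e :&: Ac| = 1, #|e :&: Bc| = 1 & #|e :&: Cc| = 1].
Hypothesis linE : linear_hg E.

Variables (VF : {set {set V}}) (EF : {set {set {set V}}}).
Variables (h1 h2 : {set {set V}} -> {set V}) (s : seq {set V}).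
Hypothesis VF_pairs : VF \subset pairs Ac :|: pairs Bc.
Hypothesis edge_sub : forall f, f \in EF -> f \subset VF.
Hypothesis card_edge : forall f, f \in EF -> #|f| = 2.
Hypothesis h_realizes : forall f, f \in EF -> realizes f (h1 f) (h2 f).
Hypothesis mem_s : forall x, (x \in s) = (x \in VF).
Hypothesis s_uniq : uniq s.
Hypothesis s_degenerate : forall s1 x s2, s = s1 ++ x :: s2 ->
  count (fun y => [set y; x] \in EF) s1 <= 2.

Definition lift f := [set h1 f; h2 f].
Definition vert_lift f := h1 f :|: h2 f.
Definition EH := \bigcup_(f in EF) lift f.
Definition UF := \bigcup_(P in VF) P.
Definition CH := Cc :&: \bigcup_(h in EH) h.
Definition VH := UF :|: CH.

Lemma lift_sub_E f : f \in EF -> lift f \subset E.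
Proof.
move/h_realizes/and5P=> [h1E h2E _ _ _].
by apply/subsetP=> h /set2P[]->.
Qed.

Lemma h1_neq_h2 f : f \in EF -> h1 f != h2 f.
Proof. by move/h_realizes/and5P=> []. Qed.

Lemma edge_of_vert_lift f :
  f \in EF -> f = [set vert_lift f :&: Ac; vert_lift f :&: Bc].
Proof. by move/h_realizes/and5P=> [_ _ _ /eqP]. Qed.

Lemma lift_center f : f \in EF -> exists2 c, c \in Cc & c \in h1 f /\ c \in h2 f.
Proof.
by move/h_realizes/and5P=> [_ _ _ _ /exists_inP[c cC /andP[c1 c2]]]; exists c.
Qed.

Lemma vert_lift_inj : {in EF &, injective vert_lift}.
Proof.
move=> f f' fE f'E lift_eq.
by rewrite (edge_of_vert_lift fE) (edge_of_vert_lift f'E) lift_eq.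
Qed.

Lemma vert_lift_cover f : vert_lift f = cover (lift f).
Proof. by rewrite /cover bigcup_setU !big_set1. Qed.

Lemma VF_class P : P \in VF -> ((P \subset Ac) || (P \subset Bc)) /\ #|P| = 2.
Proof.
by move/(subsetP VF_pairs); rewrite !inE => /orP[]/andP[-> /eqP ->]; rewrite ?orbT.
Qed.

Lemma hyperedge_C_uniq h c c' :
  h \in E -> c \in h :&: Cc -> c' \in h :&: Cc -> c = c'.
Proof.
move=> hE; have [_ _ _ hC] := hyperedge_classes hE.
have /card_le1_eqP eq_hC : #|h :&: Cc| <= 1 by rewrite hC.
by move=> cC c'C; exact: eq_hC.
Qed.

Lemma hyperedge_pair_uniq h P u u' :
  h \in E -> P \in VF -> u \in h :&: P -> u' \in h :&: P -> u = u'.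
Proof.
move=> hE /VF_class[PS _]; have [_ hA hB _] := hyperedge_classes hE.
have /card_le1_eqP eq_hP : #|h :&: P| <= 1.
  by case/orP: PS => PS; [rewrite -hA | rewrite -hB]; exact/subset_leq_card/setIS.
by move=> uP u'P; exact: eq_hP.
Qed.

Lemma pair_notin_Cc P u : P \in VF -> u \in P -> u \notin Cc.
Proof.
case/VF_class=> /orP[PA|PB] _ uP.
  by rewrite (disjointFr disjAC) ?(subsetP PA).
by rewrite (disjointFr disjBC) ?(subsetP PB).
Qed.

Lemma pair_sub_vert_lift f P : f \in EF -> P \in f -> P \subset vert_lift f.
Proof.
by move=> fE; rewrite {1}(edge_of_vert_lift fE) => /set2P[]->; apply: subsetIl.
Qed.

Lemma mem_vert_lift_notin_Cc f v :
  f \in EF -> v \in vert_lift f -> v \notin Cc -> exists2 Q, Q \in f & v \in Q.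
Proof.
move=> fE vX vC; have : v \in [set: V] by [].
rewrite -cover_classes !inE (negbTE vC) orbF => /orP[vA|vB].
  exists (vert_lift f :&: Ac); last by rewrite inE vX.
  by rewrite {2}(edge_of_vert_lift fE) set21.
exists (vert_lift f :&: Bc); last by rewrite inE vX.
by rewrite {2}(edge_of_vert_lift fE) set22.
Qed.

Lemma mem_EH f h : f \in EF -> h \in lift f -> h \in EH.
Proof. by move=> fE hf; apply/bigcupP; exists f. Qed.

Lemma EH_sub_E : EH \subset E.
Proof. by apply/bigcupsP=> f /lift_sub_E. Qed.

Lemma card_EH_le : #|EH| <= 2 * #|EF|.
Proof.
rewrite (leq_trans (card_bigcup_le _ _)) // mulnC -sum_nat_const.
by apply: leq_sum => f _; rewrite cards2; case: (_ != _).
Qed.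

Lemma EH_sub_VH h : h \in EH -> h \subset VH.
Proof.
move=> hEH; have /bigcupP[f fE hf] := hEH; apply/subsetP=> v vh.
rewrite !inE; have [vC|vC] := boolP (v \in Cc).
  by apply/orP; right; apply/bigcupP; exists h.
have vX : v \in vert_lift f by rewrite vert_lift_cover; apply/bigcupP; exists h.
have [Q Qf vQ] := mem_vert_lift_notin_Cc fE vX vC.
by apply/orP; left; apply/bigcupP; exists Q; rewrite // (subsetP (edge_sub fE)).
Qed.

Lemma VH_gt0 : VF != set0 -> 0 < #|VH|.
Proof.
case/set0Pn=> P PV; have [_ P2] := VF_class PV.
have /card_gt0P[u uP] : 0 < #|P| by rewrite P2.
by apply/card_gt0P; exists u; rewrite inE; apply/orP; left; apply/bigcupP; exists P.
Qed.

Definition EH_at c := [set h in EH | c \in h].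

Lemma lift_sub_EH_at f h c :
  f \in EF -> h \in lift f -> c \in Cc -> c \in h -> lift f \subset EH_at c.
Proof.
move=> fE hf cC ch; have [c0 c0C [c01 c02]] := lift_center fE.
have hE : h \in E by apply: subsetP (lift_sub_E fE) h hf.
have c0h : c0 \in h by case/set2P: hf => ->.
have -> : c = c0 by apply: (hyperedge_C_uniq hE); rewrite inE ?ch ?c0h.
by apply/subsetP=> h' h'f; rewrite inE (mem_EH fE h'f); case/set2P: h'f => ->.
Qed.

Lemma card_EH_at_ge2 c : c \in CH -> 2 <= #|EH_at c|.
Proof.
rewrite inE => /andP[cC /bigcupP[h /bigcupP[f fE hf] ch]].
have := cards2 (h1 f) (h2 f); rewrite h1_neq_h2 // => <-.
exact/subset_leq_card/(lift_sub_EH_at fE hf).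
Qed.

Lemma sum_card_EH_at : \sum_(c in CH) #|EH_at c| = #|EH|.
Proof.
rewrite -sum1_card (sum_card_rel CH EH (fun c h => c \in h)).
apply: eq_bigr => h hEH; have hE := subsetP EH_sub_E h hEH.
have [_ _ _ <-] := hyperedge_classes hE; congr #|pred_of_set _|.
apply/setP=> c; rewrite !inE andbC; case ch: (c \in h) => //=.
by rewrite andb_idr // => _; apply/bigcupP; exists h.
Qed.

Lemma card_EF_le_sum_bin : #|EF| <= \sum_(c in CH) 'C(#|EH_at c|, 2).
Proof.
have lift_inj : {in EF &, injective lift}.
  move=> f f' fE f'E lift_eq.
  by apply: vert_lift_inj; rewrite // !vert_lift_cover lift_eq.
rewrite -(card_in_imset lift_inj).
under eq_bigr => c _ do rewrite -cards_draws.
apply: leq_trans (card_bigcup_le _ _); apply/subset_leq_card/subsetP.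
move=> _ /imsetP[f fE ->]; have [c cC [c1 c2]] := lift_center fE.
have h1f : h1 f \in lift f by rewrite set21.
apply/bigcupP; exists c.
  by rewrite inE cC; apply/bigcupP; exists (h1 f); rewrite ?(mem_EH fE).
by rewrite inE cards2 h1_neq_h2 // (lift_sub_EH_at fE h1f).
Qed.

Local Notation back := (back_edges EF s).

Definition first_pair (u : V) := nth set0 s (find (fun P : {set V} => u \in P) s).

Lemma first_pairP u : u \in UF -> first_pair u \in VF /\ u \in first_pair u.
Proof.
case/bigcupP=> P PV uP.
have has_u : has (fun P : {set V} => u \in P) s by apply/hasP; exists P; rewrite ?mem_s.
split; [by rewrite -mem_s mem_nth // -has_find | exact: (nth_find set0 has_u)].
Qed.

Lemma index_first_pair_le u Q :
  Q \in VF -> u \in Q -> index (first_pair u) s <= index Q s.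
Proof.
move=> QV uQ; have Qs : Q \in s by rewrite mem_s.
have has_u : has (fun P : {set V} => u \in P) s by apply/hasP; exists Q.
rewrite /first_pair index_uniq -?has_find // leqNgt.
by apply/negP=> /(before_find set0); rewrite nth_index // uQ.
Qed.

Definition through f u := if u \in h1 f then h1 f else h2 f.
Definition other f u := if u \in h1 f then h2 f else h1 f.

Lemma through_lift f u : through f u \in lift f.
Proof. by rewrite /through; case: ifP; rewrite ?set21 ?set22. Qed.

Lemma other_lift f u : other f u \in lift f.
Proof. by rewrite /other; case: ifP; rewrite ?set21 ?set22. Qed.

Lemma vert_lift_through f u : vert_lift f = through f u :|: other f u.
Proof. by rewrite /through /other; case: ifP; rewrite // setUC. Qed.

Lemma mem_through f u : u \in vert_lift f -> u \in through f u.
Proof. by rewrite /through inE; case: ifP. Qed.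

Lemma center_through f u :
  f \in EF -> exists2 c, c \in Cc & c \in through f u /\ c \in other f u.
Proof.
by case/lift_center=> c cC [c1 c2]; exists c; rewrite // /through /other; case: ifP.
Qed.

Lemma mem_through_first u f :
  u \in UF -> f \in back (first_pair u) -> u \in through f u.
Proof.
move=> uU /back_edgesP[fE Pf _]; apply/mem_through/(subsetP (pair_sub_vert_lift fE Pf)).
by case: (first_pairP uU).
Qed.

Lemma index_first_pair_lt u u' f :
  u \in UF -> f \in back (first_pair u) -> u' \in UF -> u' \in through f u ->
  u' != u -> index (first_pair u') s < index (first_pair u) s.
Proof.
move=> uU fb u'U u'h u'u; have uh := mem_through_first uU fb.
case/back_edgesP: fb => fE Pf le_P.
have [PV uP] := first_pairP uU; have [P'V u'P'] := first_pairP u'U.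
have hE : through f u \in E by apply: subsetP (lift_sub_E fE) _ (through_lift f u).
have u'X : u' \in vert_lift f by rewrite (vert_lift_through f u) inE u'h.
have [Q Qf u'Q] := mem_vert_lift_notin_Cc fE u'X (pair_notin_Cc P'V u'P').
have QV : Q \in VF by apply: subsetP (edge_sub fE) Q Qf.
have QP : Q != first_pair u.
  apply: contraNneq u'u => QP; apply/eqP/(hyperedge_pair_uniq hE PV).
    by rewrite inE u'h -QP.
  by rewrite inE uh.
apply: leq_ltn_trans (index_first_pair_le QV u'Q) _.
rewrite ltn_neqAle le_P // andbT; apply: contra QP => /eqP idx_eq.
by rewrite -(nth_index set0 (_ : Q \in s)) ?idx_eq ?nth_index ?mem_s.
Qed.

Lemma through_inj u f f' :
  u \in UF -> f \in back (first_pair u) -> f' \in back (first_pair u) ->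
  through f u = through f' u -> f = f'.
Proof.
move=> uU fb f'b h_eq; have uh := mem_through_first uU fb.
case/back_edgesP: fb => fE Pf _; case/back_edgesP: f'b => f'E Pf' _.
have [PV uP] := first_pairP uU; set P := first_pair u in PV uP Pf Pf'.
set h := through f u; set o := other f u; set o' := other f' u.
have hE : h \in E by apply: subsetP (lift_sub_E fE) _ (through_lift f u).
have oE : o \in E by apply: subsetP (lift_sub_E fE) _ (other_lift f u).
have o'E : o' \in E by apply: subsetP (lift_sub_E f'E) _ (other_lift f' u).
have [c cC [ch co]] := center_through u fE.
have [c' c'C [c'h co']] := center_through u f'E; rewrite -h_eq in c'h.
have c'c : c' = c by apply: (hyperedge_C_uniq hE); rewrite inE ?c'h ?ch.
have [_ P2] := VF_class PV.
have /card_gt0P[y /setD1P[yu yP]] : 0 < #|P :\ u|.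
  by move: (cardsD1 u P); rewrite uP P2 add1n => -[<-].
have yh : y \notin h.
  by apply: contra yu => yh; apply/eqP/(hyperedge_pair_uniq hE PV); rewrite inE ?yh ?uh.
have y_other g : g \in EF -> P \in g -> through g u = h -> y \in other g u.
  move=> gE Pg hg; have := subsetP (pair_sub_vert_lift gE Pg) y yP.
  by rewrite (vert_lift_through g u) hg inE (negbTE yh).
have yc : y != c by apply: contraNneq (pair_notin_Cc PV yP) => ->.
have yc_sub : [set y; c] \subset o :&: o'.
  apply/subsetP => z /set2P[]->; rewrite inE ?co -?c'c ?co' ?andbT //.
  by rewrite !y_other.
have o_eq : o = o'.
  apply/eqP/negPn/negP => /(linE oE o'E) le1.
  by have := leq_trans (subset_leq_card yc_sub) le1; rewrite cards2 yc.
apply: vert_lift_inj; rewrite // (vert_lift_through f u) (vert_lift_through f' u).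
by rewrite -/h -/o -/o' -h_eq o_eq.
Qed.

Lemma sum_back_first_pair_le : \sum_(u in UF) #|back (first_pair u)| <= #|EH|.
Proof.
apply: (sum_card_le_of_inj (g := fun u f => through f u)).
  move=> u f _ /back_edgesP[fE _ _]; exact: mem_EH fE (through_lift f u).
move=> u u' f f' uU u'U fb f'b h_eq.
have [eq_u|u'u] := eqVneq u' u.
  by subst u'; rewrite (through_inj uU fb f'b h_eq).
have u'h : u' \in through f u by rewrite h_eq mem_through_first.
have uh' : u \in through f' u' by rewrite -h_eq mem_through_first.
have lt_u'u := index_first_pair_lt uU fb u'U u'h u'u.
have lt_uu' : index (first_pair u) s < index (first_pair u') s.
  by apply: (index_first_pair_lt u'U f'b uU uh'); rewrite eq_sym.
by move: lt_u'u; rewrite ltnNge ltnW.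
Qed.

Lemma sum_defect_first_pair_le :
  \sum_(u in UF) (2 - #|back (first_pair u)|) <= 2 * \sum_(P in VF) (2 - #|back P|).
Proof.
apply: leq_sum_comp => [u /first_pairP[] // | P PV].
have [_ <-] := VF_class PV; apply/subset_leq_card/subsetP => u.
by rewrite inE => /andP[/first_pairP[_ uP] /eqP <-].
Qed.

Lemma card_UF_le : 2 * #|UF| + 2 * #|EF| <= #|EH| + 4 * #|VF|.
Proof.
have sum_UF : 2 * #|UF| <= \sum_(u in UF) #|back (first_pair u)| +
                          \sum_(u in UF) (2 - #|back (first_pair u)|).
  by rewrite mulnC -sum_nat_const -big_split; apply: leq_sum => u _; rewrite -leq_subLR.
have sum_VF : \sum_(P in VF) #|back P| + \sum_(P in VF) (2 - #|back P|) = 2 * #|VF|.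
  rewrite mulnC -sum_nat_const -big_split; apply: eq_bigr => P PV.
  by rewrite /= subnKC // (card_back_edges_le edge_sub card_edge mem_s s_degenerate).
have sum_back : #|EF| <= \sum_(P in VF) #|back P|.
  exact: card_edges_le_sum_back.
have := sum_back_first_pair_le; have := sum_defect_first_pair_le; lia.
Qed.

Lemma card_EH_eq : #|EH| = \sum_(c in CH) (#|EH_at c| - 2) + 2 * #|CH|.
Proof.
rewrite -sum_card_EH_at mulnC -sum_nat_const -big_split /=.
by apply: eq_bigr => c /card_EH_at_ge2/subnK.
Qed.

Lemma card_VH_le_UF_CH : #|VH| <= #|UF| + #|CH|.
Proof. exact: (leq_card_setU UF CH).1. Qed.

Lemma card_VH_le : #|VH| <= #|EH| + (2 * #|VF| - #|EF|).
Proof. by have := card_VH_le_UF_CH; have := card_UF_le; have := card_EH_eq; lia. Qed.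

Lemma double_card_EF_le_of_sparse : #|EH| < #|VH| ->
  2 * #|EF| <= #|EH| + (2 * (2 * #|VF| - #|EF|) + 1) * (2 * (2 * #|VF| - #|EF|)).
Proof.
move=> sparse; set Y := \sum_(c in CH) (#|EH_at c| - 2).
have EF_Y : 2 * #|EF| <= #|EH| + (Y + 2) * Y.
  rewrite -sum_card_EH_at; apply: leq_trans (double_sum_bin2_le _ _).
  by rewrite leq_mul2l card_EF_le_sum_bin.
have Y_lt : Y < 2 * (2 * #|VF| - #|EF|).
  by have := card_VH_le_UF_CH; have := card_UF_le; have := card_EH_eq; lia.
apply: leq_trans EF_Y _; rewrite leq_add2l leq_mul //; lia.
Qed.

End Lift.

End Realization.

Theorem lemma2p2 (V : finType) (Ac Bc Cc : {set V}) (E : {set {set V}})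
    (EG : {set {set {set V}}}) (VF : {set {set V}}) (EF : {set {set {set V}}})
    (k t : nat) :
  three_partite Ac Bc Cc E ->
  linear_hg E ->
  bipartite_graph (pairs Ac) (pairs Bc) EG ->
  (forall a1 a2 b1 b2 : V, a1 != a2 -> b1 != b2 ->
     [set [set a1; a2]; [set b1; b2]] \in EG ->
     (exists2 c, c \in Cc & [set a1; b1; c] \in E /\ [set a2; b2; c] \in E)
     \/ (exists2 c', c' \in Cc & [set a1; b2; c'] \in E /\ [set a2; b1; c'] \in E)) ->
  4 <= t -> t <= k ->
  gsubgraph (pairs Ac :|: pairs Bc) EG VF EF ->
  two_degenerate VF EF ->
  #|VF| = k -> #|EF| = 2 * k - t ->
  exists (VH : {set V}) (EH : {set {set V}}),
    [/\ hsubgraph E VH EH,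
        #|VH| <= #|EH| + 4 * t,
        #|EH| <= 4 * k &
        (4 * k <= #|EH| + 10 ^ 4 * t ^ 3) \/ (#|VH| <= #|EH| /\ 0 < #|VH|)].
Proof.
move=> [dAB dAC dBC cover_classes classes] linE bipG witness t4 tk.
move=> [VF_pairs EF_G edge_sub] [s [s_uniq mem_s s_deg]] VFk EFk.
have card_edge f : f \in EF -> #|f| = 2.
  by move/(subsetP EF_G); apply: card_bipartite_edge bipG; apply: disjoint_pairs.
have [h1 [h2 h_realizes]] := realization_choice dAB dAC dBC bipG witness EF_G.
have VH_le := card_VH_le dAB dAC dBC cover_classes classes linE VF_pairs edge_sub
  card_edge h_realizes mem_s s_uniq s_deg.
have EF_le := double_card_EF_le_of_sparse dAB dAC dBC cover_classes classes linE
  VF_pairs edge_sub card_edge h_realizes mem_s s_uniq s_deg.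
have EH_le := card_EH_le EF h1 h2.
exists (VH Cc VF EF h1 h2), (EH EF h1 h2).
(* The cardinals over [{set {set V}}] mention [reverse_coercion], which [lia]
   would otherwise treat as atoms distinct from the unwrapped ones. *)
rewrite /reverse_coercion in VFk EFk VH_le EF_le EH_le *.
split; [split | lia | lia | ].
- exact: EH_sub_E h_realizes.
- by move=> h; apply: (EH_sub_VH cover_classes edge_sub h_realizes).
have [dense | /EF_le sparse] := leqP #|VH Cc VF EF h1 h2| #|EH EF h1 h2|.
  by right; split=> //; apply: VH_gt0 VF_pairs _; rewrite -card_gt0 VFk; lia.
rewrite VFk EFk (_ : 2 * k - (2 * k - t) = t) in sparse; last by lia.
by left; have := quadratic_le_cube t; lia.
Qed.
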